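(* Let $k>\ell\ge1$, $m\ge1$ and $w=a^kba^\ell b^m$. For every $u\in L^{\epsilon}_{\vdash_{\{w\}}}$ and every nonempty prefix $p$ of $u$, $\nu(p)\ge \frac{k+\ell}{m+1}$, where $\nu(p)=|p|_a/|p|_b$ (with $\nu(p)=\infty$ if $|p|_b=0$).
   Context: $|u|_c$ is the number of occurrences of letter $c$ in $u$. For words $u,v$, the shuffle $u \sqcup\!\sqcup v$ is the set of all words $u_1v_1\cdots u_kv_k$ with $k\ge 1$, $u=u_1\cdots u_k$, $v=v_1\cdots v_k$ (pieces possibly empty). For a finite set $I$ of words, $v \vdash_I w$ means $w \in v \sqcup\!\sqcup u$ for some $u\in I$; $\vdash_I^*$ is its reflexive-transitive closure and $L^{\epsilon}_{\vdash_I}=\{w : \epsilon \vdash_I^* w\}$. *)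

From mathcomp Require Import all_boot all_order all_algebra.
From Stdlib Require Import Relation_Operators.
Set Implicit Arguments. Unset Strict Implicit. Unset Printing Implicit Defensive.

(* Alphabet {a, b}, encoded as bool: a = true, b = false. *)
Definition word := seq bool.
Definition la : bool := true.
Definition lb : bool := false.

Definition occ (c : bool) (u : word) : nat := count_mem c u.

Definition pw (c : bool) (n : nat) : word := nseq n c.

Definition shuffle (u v w : word) : Prop :=
  exists (us vs : seq word),
    [/\ size us = size vs, 0 < size us, flatten us = u, flatten vs = v &
        w = flatten [seq x.1 ++ x.2 | x <- zip us vs]].

Definition derives (I : seq word) (v w : word) : Prop :=
  exists2 u, u \in I & shuffle v u w.

Definition Leps (I : seq word) (w : word) : Prop :=
  clos_refl_trans word (derives I) [::] w.

(* ν(p) >= r, where ν(p) = |p|_a / |p|_b and ν(p) = ∞ when |p|_b = 0 *)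
Definition nu_ge (p : word) (r : rat) : Prop :=
  occ lb p = 0%N \/ (r <= (occ la p)%:R / (occ lb p)%:R)%R.

(* Give a letter a the weight m + 1 and a letter b the weight -(k + l).  Every
   prefix of w = a^k b a^l b^m has nonnegative weight: after the first b this
   needs (m + 1) k >= k + l, which holds since k > l and m >= 1, and the
   prefixes ending in b^j weigh (m - j)(k + l) >= 0.  A prefix of a
   shuffle of u and v is, up to permutation, a prefix of u followed by a prefix
   of v, so nonnegativity of all prefix weights survives every derivation step.
   For a prefix p with |p|_b > 0 this weight inequality reads
   |p|_a / |p|_b >= (k + l) / (m + 1). *)
From mathcomp Require Import all_boot all_order all_algebra.
From Stdlib Require Import Relation_Operators Operators_Properties.
From mathcomp Require Import zify.
Import GRing.Theory Num.Theory.

Set Implicit Arguments.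
Unset Strict Implicit.
Unset Printing Implicit Defensive.

Lemma take_flatten_zip_perm (T : eqType) (us vs : seq (seq T)) n :
  size us = size vs ->
  exists i j, perm_eq (take n (flatten [seq x.1 ++ x.2 | x <- zip us vs]))
                      (take i (flatten us) ++ take j (flatten vs)).
Proof.
elim: us vs n => [|u us IH] [|v vs] n //= [/IH IHn].
rewrite -catA take_cat; case: ltnP => [n_lt_u|u_le_n].
  by exists n, 0; rewrite take_cat n_lt_u take0 cats0.
rewrite take_cat; case: ltnP => [n_lt_uv|uv_le_n].
  by exists (size u), (n - size u); rewrite !take_cat ltnn subnn take0 cats0 n_lt_uv.
have [i [j perm_ij]] := IHn (n - size u - size v).
exists (size u + i), (size v + j).
rewrite !take_cat !ltnNge !leq_addr /= !addKn -!catA !perm_cat2l.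
by rewrite perm_sym perm_catCA perm_cat2l perm_sym.
Qed.

Lemma shuffle_take_perm (u v w : word) n : shuffle u v w ->
  exists i j, perm_eq (take n w) (take i u ++ take j v).
Proof.
by case=> [us [vs [size_eq _ <- <- ->]]]; apply: take_flatten_zip_perm.
Qed.

Section RatioBound.

Variables alpha beta : nat.

Definition occ_ratio_ge (s : word) : bool := beta * occ lb s <= alpha * occ la s.

Definition prefix_ratio_ge (u : word) : Prop := forall n, occ_ratio_ge (take n u).

Lemma occ_ratio_ge_perm (s t : word) : perm_eq s t -> occ_ratio_ge s = occ_ratio_ge t.
Proof. by move/permP=> count_eq; rewrite /occ_ratio_ge /occ !count_eq. Qed.

Lemma occ_ratio_ge_cat (s t : word) :
  occ_ratio_ge s -> occ_ratio_ge t -> occ_ratio_ge (s ++ t).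
Proof. by rewrite /occ_ratio_ge /occ !count_cat !mulnDr => *; lia. Qed.

Lemma prefix_ratio_ge_shuffle (u v w : word) :
  prefix_ratio_ge u -> prefix_ratio_ge v -> shuffle u v w -> prefix_ratio_ge w.
Proof.
move=> Hu Hv uvw n; have [i [j perm_ij]] := shuffle_take_perm n uvw.
by rewrite (occ_ratio_ge_perm perm_ij) occ_ratio_ge_cat.
Qed.

Lemma prefix_ratio_ge_Leps (I : seq word) (u : word) :
  (forall x, x \in I -> prefix_ratio_ge x) -> Leps I u -> prefix_ratio_ge u.
Proof.
move=> HI /clos_rt_rtn1_iff Lu; elim: Lu => [n|v w [x /HI Hx vxw] _ Hv].
  by rewrite /occ_ratio_ge /occ /= !muln0.
exact: prefix_ratio_ge_shuffle vxw.
Qed.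

Lemma nu_ge_occ_ratio_ge (p : word) : 0 < alpha -> occ_ratio_ge p ->
  nu_ge p (beta%:R / alpha%:R).
Proof.
move=> alpha_gt0 Hp; rewrite /nu_ge.
have [->|b_gt0] := posnP (occ lb p); [by left | right].
rewrite ler_pdivrMr ?ltr0n // mulrAC ler_pdivlMr ?ltr0n //.
by rewrite -!natrM ler_nat [_ * alpha]mulnC.
Qed.

End RatioBound.

Lemma take_nseq_min (T : Type) i j (x : T) : take i (nseq j x) = nseq (minn i j) x.
Proof.
case: (leqP i j) => [i_le_j|j_lt_i]; first by rewrite take_nseq // (minn_idPl i_le_j).
by rewrite take_oversize ?size_nseq ?(minn_idPr (ltnW j_lt_i)) // ltnW.
Qed.

Lemma prefix_ratio_ge_generator (k l m : nat) : l < k -> 0 < m ->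
  prefix_ratio_ge m.+1 (k + l) (pw la k ++ [:: lb] ++ pw la l ++ pw lb m).
Proof.
move=> l_lt_k m_gt0 n.
rewrite /occ_ratio_ge /pw -[[:: lb]]/(nseq 1 lb) !take_cat !size_nseq.
by repeat case: ifP => _; rewrite /occ ?count_cat !take_nseq_min !count_nseq /=; nia.
Qed.

Theorem lemma5 (k l m : nat) :
  (l < k)%N -> (1 <= l)%N -> (1 <= m)%N ->
  let w := pw la k ++ [:: lb] ++ pw la l ++ pw lb m in
  forall u : word, Leps [:: w] u ->
  forall p : word, p != [::] -> prefix p u ->
  nu_ge p ((k + l)%:R / (m.+1)%:R : rat).
Proof.
move=> l_lt_k _ m_gt0 w u Lu p _; rewrite prefixE => /eqP <-.
apply: nu_ge_occ_ratio_ge => //.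
apply: (prefix_ratio_ge_Leps _ Lu) => x; rewrite inE => /eqP ->.
exact: prefix_ratio_ge_generator.
Qed.
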